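(* Let $F$, $H$, $X$, $\Omega$, $Q$ and the sequences generated by the IneIREG method be as described in the context, with no inertia, i.e. $\alpha_k=0$ for all $k\ge0$, and suppose $H$ is $\mu$-strongly monotone for some $\mu>0$. Suppose $\eta_k\equiv\eta>0$ and $\lambda_k\in[\underline\lambda,\overline\lambda]$ for all $k\ge0$ with $0<\underline\lambda\le\overline\lambda<1/L$, $L:=L_F+\eta L_H$. Let $\beta_k:=\big(\frac{1}{1-\lambda_k^2L^2}+\frac{1}{2\lambda_k\eta\mu}\big)^{-1}$, $p_k:=\big(\prod_{i=0}^k(1-\beta_i)\big)^{-1}$ for $k\ge0$, for $k\ge1$ $\Lambda_k:=\sum_{j=0}^{k-1}\lambda_j\eta p_j$ and $\overline y_k:=\Lambda_k^{-1}\sum_{j=0}^{k-1}\lambda_j\eta p_jy_j$, and $\beta:=\big(\frac{1}{1-\overline\lambda^2L^2}+\frac{1}{2\underline\lambda\eta\mu}\big)^{-1}\in(0,1)$. Then for all $k\ge1$, $$-B_H\,\mathrm{dist}(\overline y_k,Q)\le\mathrm{Gap}(\overline y_k,H,Q)\le(1-\beta)^k\Big(\frac{D_X^2}{2\underline\lambda\eta}\Big).$$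
   Context: Work in $\mathbb{R}^n$ with Euclidean inner product $\langle\cdot,\cdot\rangle$ and norm $\|\cdot\|$. The maps $F\colon \mathrm{Dom}\,F\to\mathbb{R}^n$ and $H\colon\mathrm{Dom}\,H\to\mathbb{R}^n$ are monotone and Lipschitz continuous with constants $L_F>0$ and $L_H>0$; $H$ is $\mu$-strongly monotone means $\langle H(x)-H(y),x-y\rangle\ge\mu\|x-y\|^2$ for all $x,y\in\mathrm{Dom}\,H$. $X$ is a nonempty compact convex set and $\Omega$ a nonempty closed convex set with $X\subset\Omega\subset\mathrm{Dom}\,F\cap\mathrm{Dom}\,H$; $P_X,P_\Omega$ denote orthogonal projections. $Q:=\{x\in X:\langle F(x),y-x\rangle\ge0\ \forall y\in X\}$ is assumed nonempty. $D_X:=\sup_{x,y\in X}\|x-y\|$, $B_H:=\sup_{x\in Q}\|H(x)\|$, $\mathrm{dist}(y,Q)$ is the Euclidean distance to $Q$. $\mathrm{Gap}(z,H,Q):=\sup_{x\in Q}\langle H(x),z-x\rangle$. IneIREG method: start with $x_0=x_{-1}\in X$; for $k=0,1,\dots$, with parameters $\alpha_k\ge0$, $\lambda_k>0$, $\eta_k>0$, set $w_k=x_k+\alpha_k(x_k-x_{k-1})$, $w'_k=P_\Omega(w_k)$, $y_k=P_X\big(w_k-\lambda_k(F(w'_k)+\eta_kH(w'_k))\big)$, $x_{k+1}=P_X\big(w_k-\lambda_k(F(y_k)+\eta_kH(y_k))\big)$. *)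

From HB Require Import structures.
From mathcomp Require Import all_boot all_order all_algebra.
From mathcomp Require Import all_classical all_reals all_analysis.
Set Implicit Arguments. Unset Strict Implicit. Unset Printing Implicit Defensive.
Import Order.TTheory GRing.Theory Num.Theory.
Import numFieldNormedType.Exports.
Local Open Scope classical_set_scope.
Local Open Scope ring_scope.

Section Defs.
Variables (R : realType) (n : nat).
Notation vec := 'rV[R]_n.

Definition inner (u v : vec) : R := \sum_(i < n) u ord0 i * v ord0 i.
Definition enorm (u : vec) : R := Num.sqrt (inner u u).

Definition is_convex_set (A : set vec) : Prop :=
  forall x y, A x -> A y -> forall t : R, 0 <= t <= 1 ->
    A (t *: x + (1 - t) *: y).

Definition is_projection (A : set vec) (P : vec -> vec) : Prop :=
  forall x, A (P x) /\ forall y, A y -> enorm (x - P x) <= enorm (x - y).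

Definition op_monotone_on (D : set vec) (G : vec -> vec) : Prop :=
  forall x y, D x -> D y -> 0 <= inner (G x - G y) (x - y).

Definition op_strongly_monotone_on (D : set vec) (G : vec -> vec) (mu : R) : Prop :=
  forall x y, D x -> D y -> mu * enorm (x - y) ^+ 2 <= inner (G x - G y) (x - y).

Definition op_lipschitz_on (D : set vec) (G : vec -> vec) (L : R) : Prop :=
  forall x y, D x -> D y -> enorm (G x - G y) <= L * enorm (x - y).

Definition VIsol (F : vec -> vec) (X : set vec) : set vec :=
  [set x | X x /\ forall y, X y -> 0 <= inner (F x) (y - x)].

Definition set_diam (X : set vec) : R := sup [set enorm (x - y) | x in X & y in X].
Definition sup_norm_on (H : vec -> vec) (Q : set vec) : R := sup [set enorm (H x) | x in Q].
Definition dist_to (y : vec) (Q : set vec) : R := inf [set enorm (y - x) | x in Q].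
Definition Gap (z : vec) (H : vec -> vec) (Q : set vec) : R :=
  sup [set inner (H x) (z - x) | x in Q].

End Defs.

From HB Require Import structures.
From mathcomp Require Import all_boot all_order all_algebra.
From mathcomp Require Import all_classical all_reals all_analysis.
From mathcomp Require Import ring lra.
Import Order.TTheory GRing.Theory Num.Theory.
Import numFieldNormedType.Exports.
Local Open Scope classical_set_scope.
Local Open Scope ring_scope.
Set Implicit Arguments. Unset Strict Implicit. Unset Printing Implicit Defensive.

(* Without inertia the method is the extragradient method for F + eta H.  For z in Q,
   one step satisfies
     |x_{k+1} - z|^2 <= (1 - beta_k) |x_k - z|^2 - 2 lambda_k eta <H z, y_k - z>:
   the obtuse-angle inequalities of the two projections onto X give the classical
   extragradient estimate, monotonicity of F and the VI property of z remove the
   F-terms, strong monotonicity of H produces mu |y_k - z|^2, and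
   (1 - lambda^2 L^2) |a|^2 + 2 lambda eta mu |b|^2 >= beta_k |a + b|^2 merges the two
   quadratic terms into |x_k - z|^2.  Dividing by prod_{i<=k} (1 - beta_i) and
   telescoping bounds sum_{j<k} lambda_j eta p_j <H z, y_j - z> = Lambda_k <H z, ybar_k - z>
   by |x_0 - z|^2 / 2 <= D_X^2 / 2, while already the last term of Lambda_k is at least
   lam_lo eta (1 - beta)^-k.  The lower bound on the gap is Cauchy-Schwarz. *)

Section Euclidean.
Variables (R : realType) (n : nat).
Notation vec := 'rV[R]_n.
Implicit Types u v w : vec.

Lemma innerC u v : inner u v = inner v u.
Proof. by apply: eq_bigr => i _; rewrite mulrC. Qed.

Lemma innerDl u v w : inner (u + v) w = inner u w + inner v w.
Proof. by rewrite /inner -big_split; apply: eq_bigr => i _; rewrite mxE mulrDl. Qed.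

Lemma innerZl (k : R) u v : inner (k *: u) v = k * inner u v.
Proof. by rewrite /inner mulr_sumr; apply: eq_bigr => i _; rewrite mxE mulrA. Qed.

Lemma innerNl u v : inner (- u) v = - inner u v.
Proof. by rewrite -scaleN1r innerZl mulN1r. Qed.

Lemma innerBl u v w : inner (u - v) w = inner u w - inner v w.
Proof. by rewrite innerDl innerNl. Qed.

Lemma innerDr u v w : inner w (u + v) = inner w u + inner w v.
Proof. by rewrite innerC innerDl !(innerC w). Qed.

Lemma innerZr (k : R) u v : inner v (k *: u) = k * inner v u.
Proof. by rewrite innerC innerZl innerC. Qed.

Lemma innerNr u v : inner v (- u) = - inner v u.
Proof. by rewrite innerC innerNl innerC. Qed.

Lemma innerBr u v w : inner w (u - v) = inner w u - inner w v.
Proof. by rewrite innerDr innerNr. Qed.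

Lemma inner0l u : inner 0 u = 0.
Proof. by rewrite -(scale0r 0) innerZl mul0r. Qed.

Lemma inner_sumr u (c : nat -> R) (v : nat -> vec) k :
  inner u (\sum_(j < k) c j *: v j) = \sum_(j < k) c j * inner u (v j).
Proof.
elim: k => [|k IH]; first by rewrite !big_ord0 innerC inner0l.
by rewrite !big_ord_recr /= innerDr innerZr IH.
Qed.

Lemma inner_selfD u v : inner (u + v) (u + v) = inner u u + 2 * inner u v + inner v v.
Proof. rewrite !(innerDl, innerDr) (innerC v u); ring. Qed.

Lemma inner_selfZB (s t : R) u v :
  inner (s *: u - t *: v) (s *: u - t *: v) =
  s ^+ 2 * inner u u - 2 * s * t * inner u v + t ^+ 2 * inner v v.
Proof. rewrite !(innerBl, innerBr, innerZl, innerZr) (innerC v u); ring. Qed.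

Lemma inner_ge0 u : 0 <= inner u u.
Proof. by apply: sumr_ge0 => i _; rewrite -expr2 sqr_ge0. Qed.

Lemma inner_eq0 u : inner u u = 0 -> u = 0.
Proof.
move=> /eqP; rewrite /inner psumr_eq0; last by move=> i _; rewrite -expr2 sqr_ge0.
move=> /allP u0; apply/rowP => i; rewrite mxE.
by have := u0 i (mem_index_enum _); rewrite /= mulf_eq0 orbb => /eqP.
Qed.

Lemma enorm_ge0 u : 0 <= enorm u.
Proof. exact: sqrtr_ge0. Qed.

Lemma enorm_sqr u : enorm u ^+ 2 = inner u u.
Proof. by rewrite sqr_sqrtr // inner_ge0. Qed.

Lemma enorm_eq0 u : enorm u = 0 -> u = 0.
Proof. by move=> u0; apply: inner_eq0; rewrite -enorm_sqr u0 expr0n. Qed.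

Lemma enorm0 : enorm (0 : vec) = 0.
Proof. by rewrite /enorm inner0l sqrtr0. Qed.

Lemma enormZ (k : R) u : enorm (k *: u) = `|k| * enorm u.
Proof. by rewrite /enorm innerZl innerZr mulrA -expr2 sqrtrM ?sqr_ge0 // sqrtr_sqr. Qed.

Lemma enormN u : enorm (- u) = enorm u.
Proof. by rewrite -scaleN1r enormZ normrN1 mul1r. Qed.

Lemma ler_enorm u v : (enorm u <= enorm v) = (inner u u <= inner v v).
Proof. by rewrite /enorm ler_sqrt // inner_ge0. Qed.

Lemma cauchy_schwarz u v : inner u v <= enorm u * enorm v.
Proof.
have [|uv0] := eqVneq (enorm u * enorm v) 0.
  move=> /eqP; rewrite mulf_eq0 => /orP[] /eqP /enorm_eq0 ->;
    by rewrite ?(innerC u) inner0l enorm0 ?mul0r ?mulr0.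
have uv_gt0 : 0 < enorm u * enorm v by rewrite lt0r uv0 mulr_ge0 ?enorm_ge0.
have := inner_ge0 (enorm v *: u - enorm u *: v).
rewrite inner_selfZB -!enorm_sqr; nra.
Qed.

Lemma ler_enormD u v : enorm (u + v) <= enorm u + enorm v.
Proof.
rewrite -(ler_pXn2r (_ : 0 < 2)%N) ?nnegrE ?addr_ge0 ?enorm_ge0 //.
rewrite enorm_sqr inner_selfD sqrrD !enorm_sqr.
have := cauchy_schwarz u v; lra.
Qed.

End Euclidean.

Section Projection.
Variables (R : realType) (n : nat).
Notation vec := 'rV[R]_n.
Variables (A : set vec) (P : vec -> vec).
Hypothesis projP : is_projection A P.

Lemma proj_mem u : A (P u).
Proof. by have [] := projP u. Qed.

Lemma proj_fixed u : A u -> P u = u.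
Proof.
move=> Au; have [_ /(_ u Au)] := projP u; rewrite subrr enorm0 => le0.
have /enorm_eq0 /eqP : enorm (u - P u) = 0 by apply/le_anti; rewrite le0 enorm_ge0.
by rewrite subr_eq0 => /eqP.
Qed.

Lemma proj_obtuse u v : is_convex_set A -> A v -> inner (u - P u) (v - P u) <= 0.
Proof.
move=> convA Av; have [Ap nearest] := projP u.
set a := u - P u; set b := v - P u; set c := inner a b; set B := inner b b.
have key t : 0 < t <= 1 -> 2 * c <= t * B.
  case/andP=> t0 t1; have tI : 0 <= t <= 1 by rewrite ltW.
  have := nearest _ (convA _ _ Av Ap t tI); rewrite ler_enorm.
  have -> : u - (t *: v + (1 - t) *: P u) = 1 *: a - t *: b.
    by apply/rowP => i; rewrite !mxE; ring.
  rewrite inner_selfZB -/c -/B expr1n !mul1r => le_a.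
  rewrite -(ler_pM2l t0) mulrA; rewrite expr2 in le_a; lra.
have B0 : 0 <= B := inner_ge0 b.
rewrite leNgt; apply/negP => c0.
have Bc0 : 0 < B + c by lra.
have t1 : c / (B + c) <= 1 by rewrite ler_pdivrMr // mul1r; lra.
have tB : c / (B + c) * B <= c by rewrite mulrAC ler_pdivrMr // ler_pM2l //; lra.
have := key (c / (B + c)); rewrite divr_gt0 // t1 => /(_ isT); lra.
Qed.

End Projection.

Section ExtragradientStep.
Variables (R : realType) (n : nat).
Notation vec := 'rV[R]_n.

Lemma inner_selfD_weighted (a b : vec) (s t : R) : 0 < s -> 0 < t ->
  (1 / s + 1 / t)^-1 * inner (a + b) (a + b) <= s * inner a a + t * inner b b.
Proof.
move=> s0 t0; have := inner_ge0 (s *: a - t *: b).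
rewrite inner_selfZB => h; rewrite inner_selfD -subr_ge0.
have -> : s * inner a a + t * inner b b -
    (1 / s + 1 / t)^-1 * (inner a a + 2 * inner a b + inner b b) =
    (s ^+ 2 * inner a a - 2 * s * t * inner a b + t ^+ 2 * inner b b) / (s + t).
  by field; rewrite ?gt_eqF ?addr_gt0.
by rewrite divr_ge0 // ltW // addr_gt0.
Qed.

(* [w = P(u - g)], [v = P(u - h)]: the two projections of one extragradient step. *)
Lemma extragradient_ineq (u v w z g h : vec) (K m r : R) :
  inner (u - g - w) (z - w) <= 0 ->
  inner (u - h - v) (w - v) <= 0 ->
  inner (h - g) (h - g) <= K * inner (u - v) (u - v) ->
  m * inner (v - z) (v - z) + r <= inner g (v - z) ->
  inner (w - z) (w - z) <= inner (u - z) (u - z) - (1 - K) * inner (u - v) (u - v)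
     - 2 * m * inner (v - z) (v - z) - 2 * r.
Proof.
have := inner_ge0 ((h - g) - (w - v)).
rewrite !(innerBl, innerBr) !(innerC v u, innerC w u, innerC z u, innerC g u,
  innerC h u, innerC w v, innerC z v, innerC g v, innerC h v, innerC z w,
  innerC g w, innerC h w, innerC g z, innerC h z, innerC h g).
lra.
Qed.

Lemma extragradient_contraction (u v w z g h : vec) (K m r : R) :
  inner (u - g - w) (z - w) <= 0 ->
  inner (u - h - v) (w - v) <= 0 ->
  inner (h - g) (h - g) <= K * inner (u - v) (u - v) ->
  m * inner (v - z) (v - z) + r <= inner g (v - z) ->
  0 < 1 - K -> 0 < m ->
  inner (w - z) (w - z) <=
    (1 - (1 / (1 - K) + 1 / (2 * m))^-1) * inner (u - z) (u - z) - 2 * r.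
Proof.
move=> wP vP Lip sm K1 m0; have := extragradient_ineq wP vP Lip sm.
have := inner_selfD_weighted (u - v) (v - z) K1 (mulr_gt0 (ltr0Sn _ 1) m0).
by rewrite [u - v + _]addrA subrK; lra.
Qed.

End ExtragradientStep.

Section ContractionFactor.
Variables (R : realType) (L eta mu : R).
Hypotheses (L0 : 0 <= L) (eta0 : 0 < eta) (mu0 : 0 < mu).

Definition eg_factor (a b : R) : R :=
  (1 / (1 - a ^+ 2 * L ^+ 2) + 1 / (2 * b * eta * mu))^-1.

Lemma subr_sqr_gt0 (a : R) : 0 <= a -> a * L < 1 -> 0 < 1 - a ^+ 2 * L ^+ 2.
Proof.
move=> a0 aL; have aL0 : 0 <= a * L by rewrite mulr_ge0.
by rewrite -exprMn subr_gt0 expr2; nra.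
Qed.

Lemma eg_factor_gt0_lt1 (a b : R) : 0 <= a -> a * L < 1 -> 0 < b -> 0 < eg_factor a b < 1.
Proof.
move=> a0 aL b0; have K0 := subr_sqr_gt0 a0 aL.
have K1 : 1 <= 1 / (1 - a ^+ 2 * L ^+ 2).
  by rewrite ler_pdivlMr // mul1r lerBlDr lerDl -exprMn sqr_ge0.
have m0 : 0 < 1 / (2 * b * eta * mu) by rewrite divr_gt0 // !mulr_gt0.
rewrite /eg_factor invr_gt0 (addr_gt0 (lt_le_trans ltr01 K1)) //=.
by rewrite invf_lt1 ?addr_gt0 ?(lt_le_trans ltr01 K1) //; lra.
Qed.

Lemma eg_factor_le (a a' b b' : R) :
  0 <= a <= a' -> a' * L < 1 -> 0 < b <= b' -> eg_factor a' b <= eg_factor a b'.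
Proof.
case/andP=> a0 aa' a'L /andP[b0 bb'].
have a'0 : 0 <= a' := le_trans a0 aa'.
have b'0 : 0 < b' := lt_le_trans b0 bb'.
have K'0 := subr_sqr_gt0 a'0 a'L.
have KK' : 1 - a' ^+ 2 * L ^+ 2 <= 1 - a ^+ 2 * L ^+ 2.
  have : a * L <= a' * L by rewrite ler_wpM2r.
  rewrite lerD2l lerN2 -!exprMn !expr2 => aLa'L.
  by rewrite ler_pM ?mulr_ge0.
have K0 : 0 < 1 - a ^+ 2 * L ^+ 2 := lt_le_trans K'0 KK'.
have m0 c : 0 < c -> 0 < 2 * c * eta * mu by move=> c0; rewrite !mulr_gt0.
rewrite /eg_factor lef_pV2 ?posrE ?addr_gt0 ?divr_gt0 ?m0 //.
apply: lerD; first by rewrite !div1r lef_pV2 ?posrE.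
by rewrite !div1r lef_pV2 ?posrE ?m0 // (ler_pM2r mu0) (ler_pM2r eta0) ler_pM2l.
Qed.

End ContractionFactor.

Section Bounds.
Variables (R : realType) (n : nat).
Notation vec := 'rV[R]_n.
Implicit Types (X D E : set vec) (G K : vec -> vec).

Lemma op_monotone_onS D E G : E `<=` D -> op_monotone_on D G -> op_monotone_on E G.
Proof. by move=> ED mon u v /ED Du /ED Dv; apply: mon. Qed.

Lemma op_strongly_monotone_onS D E G mu :
  E `<=` D -> op_strongly_monotone_on D G mu -> op_strongly_monotone_on E G mu.
Proof. by move=> ED mon u v /ED Du /ED Dv; apply: mon. Qed.

Lemma op_lipschitz_onS D E G L :
  E `<=` D -> op_lipschitz_on D G L -> op_lipschitz_on E G L.
Proof. by move=> ED lip u v /ED Du /ED Dv; apply: lip. Qed.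

Lemma op_lipschitz_onDZ D G K L L' (c : R) : 0 <= c ->
  op_lipschitz_on D G L -> op_lipschitz_on D K L' ->
  op_lipschitz_on D (fun u => G u + c *: K u) (L + c * L').
Proof.
move=> c0 lipG lipK u v Du Dv.
have -> : G u + c *: K u - (G v + c *: K v) = (G u - G v) + c *: (K u - K v).
  by rewrite scalerBr addrACA opprD.
apply: (le_trans (ler_enormD _ _)); rewrite enormZ ger0_norm // mulrDl -mulrA.
by apply: lerD; [exact: lipG | exact: ler_wpM2l (lipK _ _ Du Dv)].
Qed.

Lemma coord_le_mx_norm (u : vec) i : `|u ord0 i| <= `|u|.
Proof.
have := le_bigmax 0 (fun ij : 'I_1 * 'I_n => `|u ij.1 ij.2|) (ord0, i).
by rewrite -mx_normrE.
Qed.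

Lemma compact_enorm_bounded X : compact X -> exists M, forall u, X u -> enorm u <= M.
Proof.
move=> /compact_bounded [M [_ bndM]].
have bnd u : X u -> `|u| <= `|M| + 1 by apply: bndM; rewrite ltr_pwDr ?ler_norm.
exists (Num.sqrt (n%:R * (`|M| + 1) ^+ 2)) => u Xu.
rewrite /enorm ler_sqrt ?mulr_ge0 ?sqr_ge0 //.
rewrite mulr_natl -[n in _ *+ n]card_ord -sumr_const.
apply: ler_sum => i _; rewrite -expr2 -real_normK ?num_real // lerXn2r ?nnegrE //.
exact: le_trans (coord_le_mx_norm u i) (bnd u Xu).
Qed.

Lemma set_diam_ub X u v : compact X -> X u -> X v -> enorm (u - v) <= set_diam X.
Proof.
move=> /compact_enorm_bounded [M bndM] Xu Xv.
apply: sup_upper_bound; last by exists u => //; exists v.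
split; first by exists (enorm (u - v)), u => //; exists v.
exists (M + M) => _ [a Xa [b Xb <-]].
by apply: (le_trans (ler_enormD _ _)); rewrite enormN lerD ?bndM.
Qed.

Lemma op_lipschitz_on_bounded X G L (M : R) u0 : 0 <= L ->
  op_lipschitz_on X G L -> (forall u, X u -> enorm u <= M) -> X u0 ->
  forall u, X u -> enorm (G u) <= enorm (G u0) + L * (M + M).
Proof.
move=> L0 lip bndM Xu0 u Xu.
have -> : G u = G u0 + (G u - G u0) by rewrite addrC subrK.
apply: (le_trans (ler_enormD _ _)); rewrite lerD2l.
apply: (le_trans (lip _ _ Xu Xu0)); rewrite ler_wpM2l //.
by apply: (le_trans (ler_enormD _ _)); rewrite enormN lerD ?bndM.
Qed.

End Bounds.

Section Gap.
Variables (R : realType) (n : nat).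
Notation vec := 'rV[R]_n.
Variables (H : vec -> vec) (Q : set vec) (z : vec).
Hypothesis Q0 : Q !=set0.

Lemma Gap_le (c : R) : (forall u, Q u -> inner (H u) (z - u) <= c) -> Gap z H Q <= c.
Proof.
move=> ub; apply: ge_sup => [|_ [u Qu <-]]; last exact: ub.
by case: Q0 => u Qu; exists (inner (H u) (z - u)), u.
Qed.

Lemma Gap_ge_dist (M B : R) : (forall u, Q u -> enorm u <= M) ->
  (forall u, Q u -> enorm (H u) <= B) ->
  - sup_norm_on H Q * dist_to z Q <= Gap z H Q.
Proof.
move=> bndM bndB; case: (Q0) => u0 Qu0.
have gap_sup : has_sup [set inner (H u) (z - u) | u in Q].
  split; first by exists (inner (H u0) (z - u0)), u0.
  exists (B * (enorm z + M)) => _ [u Qu <-].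
  apply: (le_trans (cauchy_schwarz _ _)); apply: ler_pM; rewrite ?enorm_ge0 ?bndB //.
  by apply: (le_trans (ler_enormD _ _)); rewrite enormN lerD2l bndM.
have norm_sup : has_sup [set enorm (H u) | u in Q].
  by split; [exists (enorm (H u0)), u0 | exists B => _ [u Qu <-]; apply: bndB].
set BH := sup_norm_on H Q.
have BH_ub u : Q u -> enorm (H u) <= BH by move=> Qu; apply: sup_upper_bound => //; exists u.
have low u : Q u -> - (BH * enorm (z - u)) <= Gap z H Q.
  move=> Qu; have := cauchy_schwarz (- H u) (z - u).
  rewrite innerNl enormN => cs.
  have := ler_wpM2r (enorm_ge0 (z - u)) (BH_ub u Qu).
  have : inner (H u) (z - u) <= Gap z H Q by apply: sup_upper_bound => //; exists u.
  lra.
have [BH0|BH_neq0] := eqVneq BH 0.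
  by have := low u0 Qu0; rewrite BH0 oppr0 !mul0r oppr0.
have BH_gt0 : 0 < BH by rewrite lt0r BH_neq0 (le_trans (enorm_ge0 _) (BH_ub u0 Qu0)).
rewrite mulNr lerNl -ler_pdivrMl //.
apply: lb_le_inf; first by exists (enorm (z - u0)), u0.
by move=> _ [u Qu <-]; rewrite ler_pdivrMl // lerNl; exact: low.
Qed.

End Gap.

Section ExtragradientRate.
Variables (R : realType) (n : nat).
Notation vec := 'rV[R]_n.
Variables (F H : vec -> vec) (X : set vec) (PX : vec -> vec).
Variables (L eta mu lam_lo beta : R) (lambda : nat -> R) (x y : nat -> vec).
Hypotheses (convX : is_convex_set X) (projX : is_projection X PX).
Hypotheses (monF : op_monotone_on X F) (smH : op_strongly_monotone_on X H mu).
Hypothesis lipG : op_lipschitz_on X (fun u => F u + eta *: H u) L.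
Hypotheses (L0 : 0 <= L) (eta0 : 0 < eta) (mu0 : 0 < mu) (lam_lo0 : 0 < lam_lo).
Hypotheses (lam_lo_le : forall k, lam_lo <= lambda k) (lamL : forall k, lambda k * L < 1).
Hypothesis beta_le : forall k, beta <= eg_factor L eta mu (lambda k) (lambda k).
Hypothesis x0X : X (x 0%N).
Hypothesis y_def : forall k, y k = PX (x k - lambda k *: (F (x k) + eta *: H (x k))).
Hypothesis x_succ : forall k, x k.+1 = PX (x k - lambda k *: (F (y k) + eta *: H (y k))).

Local Notation G u := (F u + eta *: H u).
Local Notation betak k := (eg_factor L eta mu (lambda k) (lambda k)).

Definition eg_prod k := \prod_(i < k) (1 - betak i).
Definition eg_weight k := lambda k * eta * (eg_prod k.+1)^-1.
Definition eg_average k := (\sum_(j < k) eg_weight j)^-1 *: \sum_(j < k) eg_weight j *: y j.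

Lemma lambda_gt0 k : 0 < lambda k.
Proof. exact: lt_le_trans (lam_lo_le k). Qed.

Lemma betak_gt0_lt1 k : 0 < betak k < 1.
Proof. by rewrite eg_factor_gt0_lt1 ?(ltW (lambda_gt0 k)) ?lambda_gt0. Qed.

Lemma eg_prod_gt0 k : 0 < eg_prod k.
Proof. by apply: prodr_gt0 => i _; rewrite subr_gt0; case/andP: (betak_gt0_lt1 i). Qed.

Lemma eg_prod_le k : eg_prod k <= (1 - beta) ^+ k.
Proof.
rewrite -[k in _ ^+ k]card_ord -prodr_const; apply: ler_prod => i _.
by case/andP: (betak_gt0_lt1 i) => _ b1; rewrite subr_ge0 (ltW b1) lerD2l lerN2 beta_le.
Qed.

Lemma eg_prodS k : eg_prod k.+1 = eg_prod k * (1 - betak k).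
Proof. by rewrite /eg_prod big_ord_recr. Qed.

Lemma eg_weight_gt0 k : 0 < eg_weight k.
Proof. by rewrite !mulr_gt0 ?lambda_gt0 ?invr_gt0 ?eg_prod_gt0. Qed.

Lemma x_mem k : X (x k).
Proof. by case: k => // k; rewrite x_succ; exact: proj_mem projX _. Qed.

Lemma y_mem k : X (y k).
Proof. by rewrite y_def; exact: proj_mem projX _. Qed.

Lemma eg_step z k : VIsol F X z ->
  inner (x k.+1 - z) (x k.+1 - z) <=
  (1 - betak k) * inner (x k - z) (x k - z) - 2 * (lambda k * eta * inner (H z) (y k - z)).
Proof.
move=> [Xz VIz]; have l0 := lambda_gt0 k.
rewrite /eg_factor (_ : 2 * lambda k * eta * mu = 2 * (lambda k * eta * mu)); last first.
  by rewrite !mulrA.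
apply: (@extragradient_contraction _ _ (x k) (y k) (x k.+1) z
  (lambda k *: G (y k)) (lambda k *: G (x k)) (lambda k ^+ 2 * L ^+ 2)
  (lambda k * eta * mu) (lambda k * eta * inner (H z) (y k - z))).
- by rewrite x_succ; apply: proj_obtuse.
- by rewrite y_def; apply: proj_obtuse => //; apply: x_mem.
- rewrite -scalerBr innerZl innerZr mulrA -expr2 -mulrA ler_wpM2l ?sqr_ge0 //.
  rewrite -!enorm_sqr -exprMn lerXn2r ?nnegrE ?mulr_ge0 ?enorm_ge0 //.
  exact: lipG (x_mem k) (y_mem k).
- have hF : 0 <= inner (F (y k)) (y k - z).
    by have := monF (y_mem k) Xz; have := VIz _ (y_mem k); rewrite (innerBl (F (y k))); lra.
  have := smH (y_mem k) Xz; rewrite enorm_sqr (innerBl (H (y k))) => hH.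
  rewrite innerZl (innerDl (F (y k))) innerZl.
  have := mulr_ge0 (ltW l0) hF; have := ler_wpM2l (mulr_ge0 (ltW l0) (ltW eta0)) hH.
  lra.
- by rewrite subr_sqr_gt0 ?(ltW l0).
- by rewrite !mulr_gt0.
Qed.

Lemma eg_telescope z k : VIsol F X z ->
  inner (x k - z) (x k - z) / eg_prod k +
    2 * \sum_(j < k) eg_weight j * inner (H z) (y j - z) <= inner (x 0%N - z) (x 0%N - z).
Proof.
move=> Qz; elim: k => [|k IH]; first by rewrite /eg_prod !big_ord0 divr1 mulr0 addr0.
have P0 := eg_prod_gt0 k.
have b1 : 0 < 1 - betak k by rewrite subr_gt0; case/andP: (betak_gt0_lt1 k).
have Pinv0 : 0 <= (eg_prod k * (1 - betak k))^-1 by rewrite invr_ge0 ltW // mulr_gt0.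
have := ler_wpM2r Pinv0 (eg_step k Qz).
rewrite big_ord_recr /= /eg_weight eg_prodS.
have -> : ((1 - betak k) * inner (x k - z) (x k - z) -
      2 * (lambda k * eta * inner (H z) (y k - z))) * (eg_prod k * (1 - betak k))^-1 =
    inner (x k - z) (x k - z) / eg_prod k -
      2 * (lambda k * eta * (eg_prod k * (1 - betak k))^-1 * inner (H z) (y k - z)).
  by field; rewrite !gt_eqF.
lra.
Qed.

Lemma eg_weight_sum_ge k : (0 < k)%N ->
  lam_lo * eta <= (\sum_(j < k) eg_weight j) * (1 - beta) ^+ k.
Proof.
case: k => // k _; rewrite big_ord_recr /= mulrDl.
have rest0 : 0 <= (\sum_(j < k) eg_weight j) * (1 - beta) ^+ k.+1.
  rewrite mulr_ge0 ?sumr_ge0 // => [j _|]; first exact: ltW (eg_weight_gt0 j).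
  exact: le_trans (ltW (eg_prod_gt0 k.+1)) (eg_prod_le k.+1).
(* the last weight alone suffices: [eg_weight k * eg_prod k.+1 = lambda k * eta] *)
have last_weight : lambda k * eta <= eg_weight k * (1 - beta) ^+ k.+1.
  rewrite -[X in X <= _](mulfVK (lt0r_neq0 (eg_prod_gt0 k.+1))) -/(eg_weight k).
  by rewrite ler_wpM2l ?eg_prod_le // ltW ?eg_weight_gt0.
have := ler_wpM2r (ltW eta0) (lam_lo_le k); lra.
Qed.

Lemma eg_average_le (D : R) z k : (forall u v, X u -> X v -> enorm (u - v) <= D) ->
  VIsol F X z -> (0 < k)%N ->
  inner (H z) (eg_average k - z) <= (1 - beta) ^+ k * (D ^+ 2 / (2 * lam_lo * eta)).
Proof.
move=> diamD Qz k0.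
set S := \sum_(j < k) eg_weight j * inner (H z) (y j - z).
set W := \sum_(j < k) eg_weight j.
have Wlo := eg_weight_sum_ge k0; rewrite -/W in Wlo.
have c0 : 0 <= (1 - beta) ^+ k := le_trans (ltW (eg_prod_gt0 k)) (eg_prod_le k).
have W0 : 0 < W.
  rewrite ltNge; apply/negP => W0; have := mulr_le0_ge0 W0 c0.
  have := mulr_gt0 lam_lo0 eta0; lra.
have avg : inner (H z) (eg_average k - z) = S / W.
  rewrite /eg_average -/W innerBr innerZr inner_sumr.
  have -> : S = \sum_(j < k) eg_weight j * inner (H z) (y j) - W * inner (H z) z.
    by rewrite /S /W mulr_suml -sumrB; apply: eq_bigr => j _; rewrite innerBr mulrBr.
  by field; rewrite gt_eqF.
have S_le : 2 * S <= D ^+ 2.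
  have := eg_telescope k Qz; rewrite -/S.
  have : 0 <= inner (x k - z) (x k - z) / eg_prod k.
    by rewrite divr_ge0 ?inner_ge0 ?ltW ?eg_prod_gt0.
  have Dz : enorm (x 0%N - z) <= D by case: Qz => Xz _; exact: diamD.
  have : inner (x 0%N - z) (x 0%N - z) <= D ^+ 2.
    by rewrite -enorm_sqr lerXn2r ?nnegrE ?enorm_ge0 // (le_trans (enorm_ge0 _) Dz).
  lra.
have q1 : 1 <= W * (1 - beta) ^+ k / (lam_lo * eta).
  by rewrite ler_pdivlMr ?mul1r // mulr_gt0.
rewrite avg ler_pdivrMr //.
have -> : (1 - beta) ^+ k * (D ^+ 2 / (2 * lam_lo * eta)) * W =
    D ^+ 2 / 2 * (W * (1 - beta) ^+ k / (lam_lo * eta)).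
  by field; rewrite !gt_eqF.
have := ler_wpM2l (divr_ge0 (sqr_ge0 D) (ler0n _ 2)) q1; rewrite mulr1; lra.
Qed.

End ExtragradientRate.

Theorem corollary4p11 (R : realType) (n : nat)
  (F H : 'rV[R]_n -> 'rV[R]_n) (DomF DomH X Omega : set 'rV[R]_n)
  (PX POmega : 'rV[R]_n -> 'rV[R]_n)
  (LF LH mu eta lam_lo lam_hi : R)
  (alpha lambda : nat -> R) (x y w w' : nat -> 'rV[R]_n) :
  0 < LF -> 0 < LH ->
  op_monotone_on DomF F -> op_lipschitz_on DomF F LF ->
  op_monotone_on DomH H -> op_lipschitz_on DomH H LH ->
  0 < mu -> op_strongly_monotone_on DomH H mu ->
  X !=set0 -> compact X -> is_convex_set X ->
  Omega !=set0 -> closed Omega -> is_convex_set Omega ->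
  X `<=` Omega -> Omega `<=` DomF `&` DomH ->
  is_projection X PX -> is_projection Omega POmega ->
  VIsol F X !=set0 ->
  (* no inertia *)
  (forall k, alpha k = 0) ->
  0 < eta ->
  0 < lam_lo -> lam_lo <= lam_hi -> lam_hi < 1 / (LF + eta * LH) ->
  (forall k, lam_lo <= lambda k <= lam_hi) ->
  (* IneIREG iterates, with x_{-1} = x_0 (encoded by x (k.-1) at k = 0) *)
  X (x 0%N) ->
  (forall k, w k = x k + alpha k *: (x k - x k.-1)) ->
  (forall k, w' k = POmega (w k)) ->
  (forall k, y k = PX (w k - lambda k *: (F (w' k) + eta *: H (w' k)))) ->
  (forall k, x k.+1 = PX (w k - lambda k *: (F (y k) + eta *: H (y k)))) ->
  let L := LF + eta * LH in
  let betak := fun k : nat =>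
    (1 / (1 - lambda k ^+ 2 * L ^+ 2) + 1 / (2 * lambda k * eta * mu))^-1 in
  let p := fun k : nat => (\prod_(i < k.+1) (1 - betak i))^-1 in
  let Lam := fun k : nat => \sum_(j < k) lambda j * eta * p j in
  let ybar := fun k : nat =>
    (Lam k)^-1 *: \sum_(j < k) (lambda j * eta * p j) *: y j in
  let beta := (1 / (1 - lam_hi ^+ 2 * L ^+ 2) + 1 / (2 * lam_lo * eta * mu))^-1 in
  let Q := VIsol F X in
  (0 < beta < 1) /\
  forall k : nat, (1 <= k)%N ->
    - sup_norm_on H Q * dist_to (ybar k) Q <= Gap (ybar k) H Q /\
    Gap (ybar k) H Q <= (1 - beta) ^+ k * (set_diam X ^+ 2 / (2 * lam_lo * eta)).

Proof.
move=> LF0 LH0 monF lipF _ lipH mu0 smH _ cX convX _ _ _ XO OD pX pO Q0 alpha0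
  eta0 lo0 lo_hi hiL lamb x0X w_def w'_def y_def x_succ L betak p Lam ybar beta Q.
have XF : X `<=` DomF by move=> u /XO /OD [].
have XH : X `<=` DomH by move=> u /XO /OD [].
have L0 : 0 < L by rewrite addr_gt0 // mulr_gt0.
have lo_le k : lam_lo <= lambda k by case/andP: (lamb k).
have hiL' : lam_hi * L < 1 by rewrite -ltr_pdivlMr.
have lamL k : lambda k * L < 1.
  by apply: le_lt_trans hiL'; rewrite ler_pM2r //; case/andP: (lamb k).
have x_mem k : X (x k) by case: k => // k; rewrite x_succ; exact: proj_mem pX _.
have w_x k : w k = x k by rewrite w_def alpha0 scale0r addr0.
have y_def' k : y k = PX (x k - lambda k *: (F (x k) + eta *: H (x k))).
  by rewrite y_def w'_def w_x (proj_fixed pO (XO _ (x_mem k))).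
have x_succ' k : x k.+1 = PX (x k - lambda k *: (F (y k) + eta *: H (y k))).
  by rewrite x_succ w_x.
have beta_le k : beta <= betak k.
  have lk0 : 0 <= lambda k := le_trans (ltW lo0) (lo_le k).
  apply: (eg_factor_le (ltW L0) eta0 mu0) => //; last by rewrite lo0 lo_le.
  by rewrite lk0; case/andP: (lamb k).
split; first by rewrite eg_factor_gt0_lt1 ?(ltW L0) ?(le_trans (ltW lo0) lo_hi).
move=> k k1; have [M bndM] := compact_enorm_bounded cX.
have [z0 [Xz0 _]] := Q0.
split.
- rewrite /Q; apply: (Gap_ge_dist (ybar k) Q0 (fun u Qu => bndM u Qu.1)) => u [Xu _].
  exact: op_lipschitz_on_bounded (ltW LH0) (op_lipschitz_onS XH lipH) bndM Xz0 _ Xu.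
- have lipG := op_lipschitz_onDZ (ltW eta0) (op_lipschitz_onS XF lipF) (op_lipschitz_onS XH lipH).
  have diam u v : X u -> X v -> enorm (u - v) <= set_diam X by exact: set_diam_ub.
  have := eg_average_le convX pX (op_monotone_onS XF monF) (op_strongly_monotone_onS XH smH)
    lipG (ltW L0) eta0 mu0 lo0 lo_le lamL beta_le x0X y_def' x_succ' diam.
  by move=> avg_le; apply: Gap_le => // z Qz; exact (avg_le z k Qz k1).
Qed.
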